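(* Let $f(n)=\sum_{k=0}^n(-1)^k\binom nk C_k C_{n-k}$ for integers $n\ge 0$. Then for all $n\ge 2$, $$n(n+2)f(n)=16(n-1)^2f(n-2).$$
   Context: $C_k=\binom{2k}{k}\frac{1}{k+1}$ denotes the $k$-th Catalan number. *)

From mathcomp Require Import all_boot all_order all_algebra.
Set Implicit Arguments. Unset Strict Implicit. Unset Printing Implicit Defensive.
Import GRing.Theory Num.Theory.

(* k-th Catalan number C_k = binom(2k,k)/(k+1) (exact division in nat). *)
Definition catalan (k : nat) : nat := 'C(k.*2, k) %/ k.+1.

Definition f (n : nat) : int :=
  (\sum_(0 <= k < n.+1) (-1) ^+ k * ('C(n, k) * catalan k * catalan (n - k))%:Z)%R.

(* Creative telescoping (Wilf-Zeilberger).  Writing t(n,k) for the signed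
   summand of f(n), both t(n,k+1)/t(n,k) and t(n-2,k)/t(n,k) are rational
   functions of n and k, coming from the hypergeometric recurrences of the
   binomial and Catalan numbers.  Hence, for an explicit rational certificate
   R(n,k) and G(n,k) := R(n,k) t(n,k),
     n(n+2) t(n,k) - 16(n-1)^2 t(n-2,k) = G(n,k+1) - G(n,k),
   for k < n.  Summed over k < n, the right side telescopes to G(n,n) - G(n,0);
   G(n,0) = 0, and G(n,n) cancels the remaining k = n term n(n+2) t(n,n)
   (t(n-2,n) = 0). *)

From mathcomp Require Import all_boot all_order all_algebra.
From mathcomp Require Import ring lra zify.
Import GRing.Theory Num.Theory.

Lemma catalan_bin k : catalan k * k.+1 = 'C(k.*2, k).
Proof.
have binS : k.+1 * 'C(k.*2, k.+1) = k * 'C(k.*2, k).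
  by rewrite mul_bin_left -addnn addnK.
have E : 'C(k.*2, k) = k.+1 * ('C(k.*2, k) - 'C(k.*2, k.+1)).
  by rewrite mulnBr binS mulSn addnK.
by rewrite /catalan {1}E mulKn // mulnC -E.
Qed.

Lemma catalanS k : (k + 2) * catalan (k + 1) = 2 * (2 * k + 1) * catalan k.
Proof.
rewrite !addn1 addn2 [2 * k]mul2n.
apply/eqP; rewrite -(eqn_pmul2l (ltn0Sn k)); apply/eqP.
have -> : k.+1 * (k.+2 * catalan k.+1) = k.+1 * 'C(k.+1.*2, k.+1).
  by rewrite -catalan_bin; ring.
have -> : k.+1 * (2 * k.*2.+1 * catalan k) = 2 * k.*2.+1 * 'C(k.*2, k).
  by rewrite -catalan_bin; ring.
have binsym := bin_sub (leq_addl k k.+1 : k.+1 <= k + k.+1).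
rewrite addnK addnS addnn in binsym.
rewrite -mul_bin_diag doubleS /= binsym.
have -> : k.*2.+2 * 'C(k.*2.+1, k.+1) = 2 * (k.+1 * 'C(k.*2.+1, k.+1)).
  by rewrite -doubleS -mul2n mulnA.
by rewrite -mul_bin_diag mulnA.
Qed.

Lemma catalanSS l :
  (l + 2) * (l + 3) * catalan (l + 2) = 4 * (2 * l + 3) * (2 * l + 1) * catalan l.
Proof.
have S1 : (l + 3) * catalan (l + 2) = 2 * (2 * l + 3) * catalan (l + 1).
  have -> : l + 3 = l + 1 + 2 by lia.
  have -> : l + 2 = l + 1 + 1 by lia.
  by rewrite catalanS; ring.
transitivity ((l + 2) * ((l + 3) * catalan (l + 2))); first by ring.
rewrite S1.
transitivity (2 * (2 * l + 3) * ((l + 2) * catalan (l + 1))); first by ring.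
rewrite catalanS; ring.
Qed.

Definition fterm n k := 'C(n, k) * catalan k * catalan (n - k).

Lemma ftermSk k i :
  (k + 1) * (k + 2) * (2 * i + 1) * fterm (k + i + 1) (k + 1)
  = (i + 1) * (2 * k + 1) * (i + 2) * fterm (k + i + 1) k.
Proof.
apply/eqP; rewrite -(eqn_pmul2l (ltn0Sn 1)); apply/eqP.
rewrite /fterm.
have -> : k + i + 1 - (k + 1) = i by lia.
have -> : k + i + 1 - k = i + 1 by lia.
have binS : (k + 1) * 'C(k + i + 1, k + 1) = (i + 1) * 'C(k + i + 1, k).
  by rewrite !addn1 mul_bin_left; congr (_ * _); lia.
transitivity ((k + 1) * 'C(k + i + 1, k + 1) * ((k + 2) * catalan (k + 1))
              * (2 * (2 * i + 1) * catalan i)); first by ring.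
by rewrite binS catalanS -(catalanS i); ring.
Qed.

Lemma ftermSSn k l :
  4 * (k + l + 2) * (k + l + 1) * (2 * l + 3) * (2 * l + 1) * fterm (k + l) k
  = (l + 2) * (l + 2) * (l + 1) * (l + 3) * fterm (k + l + 2) k.
Proof.
rewrite /fterm.
have -> : k + l + 2 - k = l + 2 by lia.
have -> : k + l - k = l by lia.
have binS1 : (k + l + 1) * 'C(k + l, k) = (l + 1) * 'C(k + l + 1, k).
  by rewrite !addn1 mul_bin_down subSn ?leq_addr // addKn.
have binS2 : (k + l + 2) * 'C(k + l + 1, k) = (l + 2) * 'C(k + l + 2, k).
  have -> : k + l + 2 = (k + l + 1).+1 by lia.
  by rewrite mul_bin_down; congr (_ * _); lia.
transitivity ((k + l + 2) * ((k + l + 1) * 'C(k + l, k)) * catalan k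
              * (4 * (2 * l + 3) * (2 * l + 1) * catalan l)); first by ring.
rewrite binS1 -catalanSS.
transitivity ((l + 1) * ((k + l + 2) * 'C(k + l + 1, k)) * catalan k
              * ((l + 2) * (l + 3) * catalan (l + 2))); first by ring.
by rewrite binS2; ring.
Qed.

Local Open Scope ring_scope.

Definition sfterm n k : rat := (-1) ^+ k * (fterm n k)%:R.

Lemma sfterm_small n k : (n < k)%N -> sfterm n k = 0.
Proof. by move=> ltnk; rewrite /sfterm /fterm bin_small // !mul0n mulr0. Qed.

Lemma sftermSk k i :
  sfterm (k + i + 1) (k + 1) * ((k%:R + 1) * (k%:R + 2) * (2 * i%:R + 1))
  = - ((i%:R + 1) * (2 * k%:R + 1) * (i%:R + 2)) * sfterm (k + i + 1) k.
Proof.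
have := ftermSk k i; rewrite /sfterm exprD expr1.
set a := fterm _ (k + 1); set b := fterm _ k; clearbody a b => E.
transitivity (- (-1) ^+ k * ((k + 1) * (k + 2) * (2 * i + 1) * a)%:R :> rat).
  by rewrite !natrM !natrD; ring.
by rewrite E !natrM !natrD; ring.
Qed.

Lemma sftermSSn k i :
  sfterm (k + i + 1 - 2) k
    * (4 * (k%:R + i%:R + 1) * (k%:R + i%:R) * (2 * i%:R + 1) * (2 * i%:R - 1))
  = (i%:R + 1) ^+ 2 * i%:R * (i%:R + 2) * sfterm (k + i + 1) k.
Proof.
(* For i = 0 the truncated index k + 1 - 2 is below k, so the term vanishes. *)
case: i => [|l].
  case: k => [|k]; first by rewrite !addr0 add0r mul0r !mulr0.
  by rewrite sfterm_small ?mul0r ?mulr0 //; lia.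
have -> : (k + l.+1 + 1 - 2 = k + l)%N by lia.
have -> : (k + l.+1 + 1 = k + l + 2)%N by lia.
have := ftermSSn k l; rewrite /sfterm.
set a := fterm (k + l) k; set b := fterm _ k; clearbody a b => E.
transitivity ((-1) ^+ k
  * (4 * (k + l + 2) * (k + l + 1) * (2 * l + 3) * (2 * l + 1) * a)%:R :> rat).
  by rewrite -(addn1 l) !natrM !natrD; ring.
by rewrite E -(addn1 l) !natrM !natrD; ring.
Qed.

Lemma subr_odd_neq0 (R : numDomainType) (i c : nat) :
  odd c -> 2 * i%:R - c%:R != 0 :> R.
Proof.
move=> oddc; rewrite subr_eq0 -natrM eqr_nat; apply/negP => /eqP E.
by move: oddc; rewrite -E oddM.
Qed.

(* The certificate found by Zeilberger's algorithm: G(n,k) = wz_poly(n,k) t(n,k)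
   / (n (n+1) (2(n-k)-1) (2(n-k)-3) (n-k+1)). *)
Definition wz_poly (N K : rat) : rat :=
  (-12*N-13*N^+2+17*N^+3+10*N^+4-8*N^+5) * K
+ (6+6*N-44*N^+2-13*N^+3+38*N^+4-8*N^+5) * K^+2
+ (-2+34*N+3*N^+2-66*N^+3+28*N^+4) * K^+3
+ (-10-2*N+54*N^+2-36*N^+3) * K^+4
+ (2-22*N+20*N^+2) * K^+5
+ (4-4*N) * K^+6.

Definition wz_cert (n k : nat) : rat :=
  wz_poly n%:R k%:R / (n%:R * (n%:R + 1) * (2 * (n%:R - k%:R) - 1)
    * (2 * (n%:R - k%:R) - 3) * (n%:R - k%:R + 1)) * sfterm n k.

Lemma wz_certS k i : (2 <= k + i + 1)%N ->
  wz_cert (k + i + 1) (k + 1) - wz_cert (k + i + 1) k =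
  (k + i + 1)%:R * ((k + i + 1)%:R + 2) * sfterm (k + i + 1) k
  - 16 * ((k + i + 1)%:R - 1) ^+ 2 * sfterm (k + i + 1 - 2) k.
Proof.
move=> n_ge2; have := sftermSk k i; have := sftermSSn k i.
rewrite /wz_cert !natrD.
set t := sfterm (k + i + 1) k; set t1 := sfterm _ (k + 1); set t2 := sfterm (_ - 2) k.
have k_ge0 : 0 <= k%:R :> rat by apply: ler0n.
have i_ge0 : 0 <= i%:R :> rat by apply: ler0n.
have ki_ge1 : 1 <= k%:R + i%:R :> rat by rewrite -natrD ler1n; lia.
have i2_sub1 := @subr_odd_neq0 rat i 1 isT; have i2_sub3 := @subr_odd_neq0 rat i 3 isT.
move=> E2 E1.
have -> : t1 = - ((i%:R + 1) * (2 * k%:R + 1) * (i%:R + 2)) * t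
                 / ((k%:R + 1) * (k%:R + 2) * (2 * i%:R + 1)).
  by rewrite -E1; field; rewrite !lt0r_neq0 //; lra.
have -> : t2 = (i%:R + 1) ^+ 2 * i%:R * (i%:R + 2) * t
   / (4 * (k%:R + i%:R + 1) * (k%:R + i%:R) * (2 * i%:R + 1) * (2 * i%:R - 1)).
  rewrite -E2; field.
  by rewrite i2_sub1 ?lt0r_neq0 //; lra.
have -> : k%:R + i%:R + 1 - (k%:R + 1) = i%:R :> rat by ring.
have -> : k%:R + i%:R + 1 - k%:R = i%:R + 1 :> rat by ring.
rewrite /wz_poly; field.
by rewrite i2_sub1 i2_sub3 ?lt0r_neq0 //; lra.
Qed.

Lemma sum_sfterm_rec m : let n := m.+2 in
  n%:R * (n%:R + 2) * \sum_(0 <= k < n.+1) sfterm n k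
  = 16 * (n%:R - 1) ^+ 2 * \sum_(0 <= k < m.+1) sfterm m k.
Proof.
move=> n.
have -> : \sum_(0 <= k < m.+1) sfterm m k = \sum_(0 <= k < n.+1) sfterm m k.
  by rewrite [RHS]big_nat_recr //= [X in X + _]big_nat_recr //= !sfterm_small // !addr0.
apply/eqP; rewrite -subr_eq0; apply/eqP.
rewrite !mulr_sumr -sumrB big_nat_recr //= (@sfterm_small m n) // mulr0 subr0.
rewrite (@telescope_sumr_eq _ 0 n (wz_cert n)) //; last first.
  move=> k /andP[_ ltkn].
  have := wz_certS k (n - k - 1)%N.
  have -> : (k + (n - k - 1) + 1 = n)%N by lia.
  have -> : (n - 2 = m)%N by lia.
  by rewrite addn1 => ->; last lia.
have wz_poly_n0 : wz_poly n%:R 0%:R = 0 by rewrite /wz_poly; ring.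
have -> : wz_cert n 0 = 0 by rewrite /wz_cert wz_poly_n0 !mul0r.
rewrite subr0 /wz_cert /wz_poly; field.
rewrite subrr mulr0 !add0r !oppr_eq0 oner_eq0 pnatr_eq0 /=.
by rewrite !lt0r_neq0 //; apply: addr_gt0.
Qed.

Lemma f_sfterm n : (f n)%:~R = \sum_(0 <= k < n.+1) sfterm n k :> rat.
Proof.
rewrite /f rmorph_sum; apply: eq_bigr => k _.
by rewrite rmorphM rmorphXn rmorphN1.
Qed.

Theorem mainTheorem7 (n : nat) (hn : (2 <= n)%N) :
  (n * (n + 2))%:Z * f n = (16 * (n - 1) ^ 2)%:Z * f (n - 2).
Proof.
case: n hn => [|[|m]] // _.
apply: (@intr_inj rat).
rewrite !rmorphM /= !f_sfterm -!pmulrn !subSS !subn0.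
have -> : (m.+2 * (m.+2 + 2))%:R = m.+2%:R * (m.+2%:R + 2) :> rat.
  by rewrite natrM natrD.
have -> : (16 * m.+1 ^ 2)%:R = 16 * (m.+2%:R - 1) ^+ 2 :> rat.
  by rewrite natrM natrX -(addn1 m.+1) natrD addrK.
exact: sum_sfterm_rec.
Qed.
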